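(* Let $0<p\leq1$, let $G=(V,E)$ be any graph with $V=\{1,\dots,n\}$, and let $M=M(G)$. Then $\lambda_1(M)\geq\vartheta_2(G)$.
   Context: $M(G)=(m_{ij})$ is the $n\times n$ matrix with $m_{ii}=1$, and for $i\neq j$: $m_{ij}=1$ if $\{i,j\}\notin E$ and $m_{ij}=(p-1)/p$ if $\{i,j\}\in E$; $\lambda_1(M)$ is its largest eigenvalue. For a graph $H$ and real $k>1$, a rigid vector $k$-coloring of $H$ is a tuple of unit vectors $(u_1,\dots,u_n)$ in $\mathbb R^n$ with $\langle u_i,u_j\rangle=-1/(k-1)$ for all edges $\{i,j\}$ of $H$ and $\langle u_i,u_j\rangle\geq-1/(k-1)$ for all non-adjacent $i\neq j$; $\bar\vartheta_2(H)$ is the infimum of such $k$, and $\vartheta_2(G)=\bar\vartheta_2(\bar G)$ with $\bar G$ the complement of $G$. *)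

From HB Require Import structures.
From mathcomp Require Import all_boot all_order all_algebra.
From mathcomp Require Import boolp classical_sets reals.
Set Implicit Arguments. Unset Strict Implicit. Unset Printing Implicit Defensive.
Import Order.TTheory GRing.Theory Num.Theory.
Local Open Scope ring_scope.
Local Open Scope classical_set_scope.

(* A simple graph on vertex set 'I_n = {0,...,n-1} (standing for {1,...,n})
   is a symmetric irreflexive relation E; E i j means {i,j} is an edge. *)

Definition Mmat {R : realType} (n : nat) (E : rel 'I_n) (p : R) : 'M[R]_n :=
  \matrix_(i, j) (if i == j then 1 else if E i j then (p - 1) / p else 1).

Definition is_lambda1 {R : realType} (n : nat) (A : 'M[R]_n) (l : R) : Prop :=
  eigenvalue A l /\ (forall a, eigenvalue A a -> a <= l).

Definition dotv {R : realType} (n : nat) (u v : 'rV[R]_n) : R :=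
  \sum_(k < n) u 0 k * v 0 k.

Definition complG (n : nat) (E : rel 'I_n) : rel 'I_n :=
  fun i j => (i != j) && ~~ E i j.

Definition rigid_vector_coloring {R : realType} (n : nat) (H : rel 'I_n) (k : R)
    (u : 'I_n -> 'rV[R]_n) : Prop :=
  (forall i, dotv (u i) (u i) = 1) /\
  (forall i j, i != j -> H i j -> dotv (u i) (u j) = - (k - 1)^-1) /\
  (forall i j, i != j -> ~~ H i j -> dotv (u i) (u j) >= - (k - 1)^-1).

Definition theta2bar {R : realType} (n : nat) (H : rel 'I_n) : R :=
  inf [set k : R | 1 < k /\ exists u, rigid_vector_coloring H k u].

Definition theta2 {R : realType} (n : nat) (E : rel 'I_n) : R :=
  theta2bar (complG E).

(* Since l is the largest eigenvalue of the symmetric matrix M,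
   k I - M is positive semidefinite for every k >= l (spectral theorem, applied
   over R[i]).  For k > 1 the Cholesky factorisation writes (k I - M) / (k - 1)
   as the Gram matrix of vectors u_1, ..., u_n of R^n.  Its diagonal is 1, its
   entries on the non-edges of G (where M is 1) are -1/(k-1), and elsewhere they
   are -M_ij/(k-1) >= -1/(k-1) because M_ij <= 1.  Hence the u_i form a rigid
   vector k-colouring of the complement of G, and theta_2(G) <= k for every
   k > l >= 1 (the diagonal of l I - M is l - 1 >= 0). *)

From HB Require Import structures.
From mathcomp Require Import all_boot all_order all_algebra.
From mathcomp Require Import boolp classical_sets reals.
From mathcomp Require Import ring lra.
From mathcomp Require Import complex.
Set Implicit Arguments.
Unset Strict Implicit.
Unset Printing Implicit Defensive.
Import Order.TTheory GRing.Theory Num.Theory.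
Local Open Scope ring_scope.

Section PsdMatrix.
Variable R : rcfType.

Definition qform n (B : 'M[R]_n) (x : 'rV[R]_n) : R := (x *m B *m x^T) 0 0.

Definition psdmx n (B : 'M[R]_n) : Prop := forall x, 0 <= qform B x.

Lemma trmx11 (z : 'M[R]_1) : z^T = z.
Proof. by rewrite [z]mx11_scalar tr_scalar_mx. Qed.

Lemma mulmx_trC m (y z : 'rV[R]_m) : y *m z^T = z *m y^T.
Proof. by rewrite -[LHS]trmx11 trmx_mul trmxK. Qed.

Lemma mulmx_tr_ge0 m (y : 'rV[R]_m) : 0 <= (y *m y^T) 0 0.
Proof. by rewrite mxE; apply: sumr_ge0 => j _; rewrite mxE -expr2 sqr_ge0. Qed.

Lemma mulmx_tr_eq0 m (y : 'rV[R]_m) : ((y *m y^T) 0 0 == 0) = (y == 0).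
Proof.
apply/idP/eqP => [|->]; last by rewrite mul0mx mxE.
rewrite mxE psumr_eq0 => [/allP y0|j _]; last by rewrite mxE -expr2 sqr_ge0.
apply/rowP => j; have /implyP := y0 j (mem_index_enum _).
by rewrite mxE -expr2 sqrf_eq0 => /(_ isT)/eqP ->; rewrite mxE.
Qed.

Lemma qformD n (A B : 'M[R]_n) x : qform (A + B) x = qform A x + qform B x.
Proof. by rewrite /qform mulmxDr mulmxDl !mxE. Qed.

Lemma qformB n (A B : 'M[R]_n) x : qform (A - B) x = qform A x - qform B x.
Proof. by rewrite /qform mulmxBr mulmxBl !mxE. Qed.

Lemma qformZ n c (B : 'M[R]_n) x : qform (c *: B) x = c * qform B x.
Proof. by rewrite /qform -scalemxAr -scalemxAl !mxE. Qed.

Lemma psdmxD n (A B : 'M[R]_n) : psdmx A -> psdmx B -> psdmx (A + B).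
Proof. by move=> psdA psdB x; rewrite qformD addr_ge0. Qed.

Lemma psdmxZ n c (B : 'M[R]_n) : 0 <= c -> psdmx B -> psdmx (c *: B).
Proof. by move=> c0 psdB x; rewrite qformZ mulr_ge0. Qed.

Lemma psdmx_scalar n c : 0 <= c -> psdmx (c%:M : 'M[R]_n).
Proof.
move=> c0 x; rewrite /qform mul_mx_scalar -scalemxAl [X in 0 <= X]mxE.
exact: mulr_ge0 (mulmx_tr_ge0 x).
Qed.

Lemma psdmx_diag n (B : 'M[R]_n) i : psdmx B -> 0 <= B i i.
Proof.
by move=> /(_ (delta_mx 0 i)); rewrite /qform trmx_delta -rowE -colE !mxE.
Qed.

Lemma qform_block n a (b : 'rV[R]_n) (D : 'M[R]_n) t y :
  qform (block_mx a%:M b b^T D) (row_mx t%:M y)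
  = t ^+ 2 * a + 2 * t * (b *m y^T) 0 0 + qform D y.
Proof.
rewrite /qform mul_row_block tr_row_mx mul_row_col !mulmxDl tr_scalar_mx.
rewrite !mul_scalar_mx !mul_mx_scalar -!scalemxAl (mulmx_trC y b).
by rewrite !mxE eqxx mulr1n; ring.
Qed.

Section Block.
Variables (n : nat) (a : R) (b : 'rV[R]_n) (D : 'M[R]_n).
Hypothesis psdB : psdmx (block_mx a%:M b b^T D).

Let psdB_at t y : 0 <= t ^+ 2 * a + 2 * t * (b *m y^T) 0 0 + qform D y.
Proof. by rewrite -qform_block. Qed.

Lemma psdmx_block_ge0 : 0 <= a.
Proof. by have := psdB_at 1 0; rewrite /qform trmx0 !mulmx0 !mxE; lra. Qed.

Lemma psdmx_block_row0 : a = 0 -> b = 0.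
Proof.
move=> a0; apply/eqP; rewrite -mulmx_tr_eq0 eq_le mulmx_tr_ge0 andbT leNgt.
apply/negP => bb_gt0; set bb := (b *m b^T) 0 0 in bb_gt0.
(* with [a = 0] the form is affine in [t], so its slope [2 b b^T] vanishes *)
have := psdB_at (- (qform D b + 1) / (2 * bb)) b; rewrite a0 -/bb.
have -> : 2 * (- (qform D b + 1) / (2 * bb)) * bb = - (qform D b + 1).
  by field; rewrite gt_eqF.
lra.
Qed.

Lemma psdmx_block_schur : psdmx (D - a^-1 *: (b^T *m b)).
Proof.
move=> y; rewrite qformB qformZ.
set c := (b *m y^T) 0 0.
have -> : qform (b^T *m b) y = c * c.
  by rewrite /qform !mulmxA (mulmx_trC y b) -mulmxA mxE big_ord1.
have [->|a_neq0] := eqVneq a 0.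
  by have := psdB_at 0 y; rewrite invr0; lra.
(* minimise the quadratic form over the first coordinate *)
have -> : qform D y - a^-1 * (c * c)
          = (- c / a) ^+ 2 * a + 2 * (- c / a) * c + qform D y by field.
exact: psdB_at.
Qed.

End Block.

(* Cholesky factorisation; a zero pivot has a zero row next to it
   ([psdmx_block_row0]), so semidefiniteness suffices. *)
Lemma psdmx_gram n (B : 'M[R]_n) :
  B^T = B -> psdmx B -> exists U : 'M[R]_n, B = U *m U^T.
Proof.
elim: n B => [|n IHn] B; first by move=> _ _; exists 0; apply/matrixP => [[]].
move: B; rewrite -[n.+1]/(1 + n)%N => B Bsym psdB.
set a := ulsubmx B 0 0; set b := ursubmx B; set D := drsubmx B.
have DE : D^T = D by rewrite /D trmx_drsub Bsym.
have BE : B = block_mx a%:M b b^T D.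
  by rewrite /a -mx11_scalar /b trmx_ursub Bsym submxK.
rewrite {}BE in psdB *; clearbody a b D.
have a_ge0 := psdmx_block_ge0 psdB.
have [|V SE] := IHn (D - a^-1 *: (b^T *m b)) _ (psdmx_block_schur psdB).
  by rewrite linearB /= linearZ /= trmx_mul trmxK DE.
set s := Num.sqrt a.
have ss : s * s = a by rewrite -expr2 sqr_sqrtr.
have sVb : s * s^-1 *: b = b.
  have [a0|a_neq0] := eqVneq a 0.
    by rewrite (psdmx_block_row0 psdB a0) scaler0.
  by rewrite divff ?scale1r // sqrtr_eq0 -ltNge lt_def a_neq0.
exists (block_mx s%:M 0 (s^-1 *: b^T) V).
rewrite tr_block_mx mulmx_block !tr_scalar_mx !trmx0 !mulmx0 !addr0.
rewrite !linearZ /= trmxK.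
congr block_mx.
- by rewrite -scalar_mxM ss.
- by rewrite mul0mx addr0 mul_scalar_mx scalerA mulrC sVb.
- by rewrite mul_mx_scalar scalerA -[in LHS]sVb linearZ.
- by rewrite -scalemxAl scalerA -invfM ss -SE addrC subrK.
Qed.
End PsdMatrix.

Lemma eigenvalue_conj_diag (F : fieldType) n (P : 'M[F]_n) (d : 'rV[F]_n) j :
  P \in unitmx -> eigenvalue (invmx P *m diag_mx d *m P) (d 0 j).
Proof.
move=> P_unit; apply/eigenvalueP; exists (row j P).
  rewrite -row_mul !mulmxA mulmxV // mul1mx mul_diag_mx.
  by apply/rowP => k; rewrite !mxE.
apply/eqP => Pj0; have := congr1 (row j) (mulmxV P_unit).
rewrite row_mul Pj0 mul0mx => /rowP/(_ j)/eqP.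
by rewrite !mxE eqxx eq_sym oner_eq0.
Qed.

Section Hermitian.
Local Open Scope sesquilinear_scope.
Local Open Scope complex_scope.

Lemma diag_form_ge0 (C : numClosedFieldType) n (y e : 'rV[C]_n) :
  (forall k, 0 <= e 0 k) -> 0 <= (y *m diag_mx e *m y ^t*) 0 0.
Proof.
move=> e_ge0; rewrite mul_mx_diag mxE; apply: sumr_ge0 => k _; rewrite !mxE.
by rewrite mulrAC mulr_ge0 ?mul_conjC_ge0.
Qed.

(* The spectral theorem is only available over an algebraically closed field,
   hence the detour through the complexification of [A]. *)
Section RealSymmetric.
Variables (R : rcfType) (n : nat) (A : 'M[R]_n).
Hypothesis Asym : A^T = A.

Local Notation AC := (map_mx (real_complex R) A).
Local Notation P := (spectralmx AC).
Local Notation d := (spectral_diag AC).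

Lemma complexify_hermitian : AC \is hermsymmx.
Proof.
rewrite is_hermitianmxE expr0 scale1r; apply/eqP/matrixP => i j.
by rewrite !mxE -[in LHS]Asym mxE; apply/esym/conjc_real.
Qed.

Lemma complexify_spectral : AC = invmx P *m diag_mx d *m P.
Proof. exact/orthomx_spectralP/hermitian_normalmx/complexify_hermitian. Qed.

Lemma spectral_diag_complexify_real j : (complex.Re (d 0 j))%:C = d 0 j.
Proof.
exact/RRe_real/(mxOverP (hermitian_spectral_diag_real complexify_hermitian)).
Qed.

Lemma eigenvalue_spectral_diag_complexify j : eigenvalue A (complex.Re (d 0 j)).
Proof.
rewrite -(eigenvalue_map (real_complex R)).
have := eigenvalue_conj_diag d j (spectral_unit AC).
rewrite -complexify_spectral.
by rewrite -{1}[d 0 j]spectral_diag_complexify_real.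
Qed.

Lemma psdmx_sub_max_eigenvalue l :
  (forall a, eigenvalue A a -> a <= l) -> psdmx (l%:M - A).
Proof.
move=> A_le x; rewrite -ler0c.
have -> : (qform (l%:M - A) x)%:C
          = (map_mx (real_complex R) (x *m (l%:M - A) *m x^T)) 0 0.
  by rewrite mxE.
rewrite !map_mxM map_mxB map_scalar_mx.
set x' := map_mx (real_complex R) x.
have -> : map_mx (real_complex R) x^T = x' ^t*.
  by apply/matrixP => i j; rewrite !mxE; apply/esym/conjc_real.
set e := \row_j (l%:C - d 0 j).
have P_unitary : P \is unitarymx := spectral_unitarymx AC.
have -> : (l%:C)%:M - AC = P ^t* *m diag_mx e *m P.
  have -> : diag_mx e = (l%:C)%:M - diag_mx d.
    by apply/matrixP => i j; rewrite !mxE; case: eqVneq; rewrite ?subr0.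
  rewrite {1}complexify_spectral -(invmx_unitary P_unitary) mulmxBr mulmxBl.
  by rewrite mul_mx_scalar -scalemxAl mulVmx ?spectral_unit // scalemx1.
have -> : x' *m (P ^t* *m diag_mx e *m P) *m x' ^t*
          = (x' *m P ^t*) *m diag_mx e *m (x' *m P ^t*) ^t*.
  by rewrite trmx_mul map_mxM trmxCK !mulmxA.
apply: diag_form_ge0 => k; rewrite mxE -spectral_diag_complexify_real -rmorphB.
by rewrite ler0c subr_ge0 A_le ?eigenvalue_spectral_diag_complexify.
Qed.

End RealSymmetric.
End Hermitian.

Lemma eigenvalue_dim_gt0 (F : fieldType) n (A : 'M[F]_n) a :
  eigenvalue A a -> (0 < n)%N.
Proof. by case: n A => // A /eigenvalueP [v _]; rewrite thinmx0 eqxx. Qed.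

Section RigidColoring.
Variable R : realType.

Lemma dotv_row n (U : 'M[R]_n) i j : dotv (row i U) (row j U) = (U *m U^T) i j.
Proof. by rewrite /dotv mxE; apply: eq_bigr => k _; rewrite !mxE. Qed.

Lemma rigid_vector_coloring_of_psd n (H : rel 'I_n) (A : 'M[R]_n) k :
    1 < k -> A^T = A -> psdmx (k%:M - A) ->
    (forall i, A i i = 1) -> (forall i j, A i j <= 1) ->
    (forall i j, i != j -> H i j -> A i j = 1) ->
  exists u, rigid_vector_coloring H k u.
Proof.
move=> k_gt1 Asym psdkA A_diag A_le1 A_edge.
have k1_gt0 : 0 < k - 1 by rewrite subr_gt0.
pose B := (k - 1)^-1 *: (k%:M - A).
have psdB : psdmx B by apply: psdmxZ psdkA; rewrite invr_ge0 ltW.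
have [|U BE] := psdmx_gram _ psdB.
  by rewrite linearZ /= linearB /= tr_scalar_mx Asym.
have dotE i j :
    dotv (row i U) (row j U) = (k - 1)^-1 * ((i == j)%:R * k - A i j).
  by rewrite dotv_row -BE !mxE mulr_natl.
exists (fun i => row i U); split; [|split] => [i|i j ij Hij|i j ij _].
- by rewrite dotE eqxx A_diag mul1r mulVf ?gt_eqF.
- by rewrite dotE (negbTE ij) A_edge // mul0r sub0r mulrN mulr1.
- rewrite dotE (negbTE ij) mul0r sub0r mulrN lerN2 -[X in _ <= X]mulr1.
  by rewrite ler_pM2l ?invr_gt0.
Qed.

Lemma theta2bar_le n (H : rel 'I_n) (k : R) :
  1 < k -> (exists u, rigid_vector_coloring H k u) -> theta2bar H <= k.
Proof. by move=> k_gt1 colH; apply: ge_inf; [exists 1 => x [/ltW] | split]. Qed.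

End RigidColoring.

Section GraphMatrix.
Variables (R : realType) (n : nat) (E : rel 'I_n) (p : R).

Lemma Mmat_sym : symmetric E -> (Mmat E p)^T = Mmat E p.
Proof. by move=> Esym; apply/matrixP => i j; rewrite !mxE eq_sym Esym. Qed.

Lemma Mmat_diag i : Mmat E p i i = 1.
Proof. by rewrite mxE eqxx. Qed.

Lemma Mmat_le1 i j : 0 < p -> Mmat E p i j <= 1.
Proof.
move=> p_gt0; rewrite mxE; case: eqP => // _; case: (E i j) => //.
by rewrite ler_pdivrMr // mul1r lerBlDr lerDl.
Qed.

Lemma Mmat_complG i j : complG E i j -> Mmat E p i j = 1.
Proof. by move=> /andP [ij /negbTE Eij]; rewrite mxE (negbTE ij) Eij. Qed.

End GraphMatrix.

Theorem lemma10 (R : realType) (p : R) (n : nat) (E : rel 'I_n)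
    (Esym : symmetric E) (Eirr : irreflexive E)
    (hp0 : 0 < p) (hp1 : p <= 1) (l : R) :
  is_lambda1 (Mmat E p) l -> theta2 E <= l.
Proof.
move=> [l_eig l_max].
have psdM := psdmx_sub_max_eigenvalue (Mmat_sym p Esym) l_max.
have l_ge1 : 1 <= l.
  have := psdmx_diag (Ordinal (eigenvalue_dim_gt0 l_eig)) psdM.
  by rewrite !mxE eqxx mulr1n subr_ge0.
apply/ler_addgt0Pr => e e_gt0.
have psdMe : psdmx ((l + e)%:M - Mmat E p).
  by rewrite raddfD /= addrAC; apply/psdmxD/psdmx_scalar/ltW.
apply: theta2bar_le; first lra.
apply: rigid_vector_coloring_of_psd (Mmat_sym p Esym) psdMe _ _ _ => //.
- lra.
- exact: Mmat_diag.
- by move=> i j; apply: Mmat_le1.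
- by move=> i j _; apply: Mmat_complG.
Qed.
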